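(* For all Maya diagrams $\sigma,\sigma'$, \[ \langle\sigma',A^{-1}(x;t)\sigma\rangle=\sum_{h}\prod_{i\in\mathbb{Z}}\Omega(h_{i-1},\sigma_i,h_i,\sigma'_i), \] where the sum runs over all row configurations $h$ from $\sigma$ to $\sigma'$ and the vertex weights are $\omega_1=\omega_3=\omega_5=1$, $\omega_2=-tx$, $\omega_4=x$, $\omega_6=(1-t)x$.
   Context: Maya diagrams are maps $\sigma:\mathbb{Z}\to\{0,1\}$ with $\sigma_i=1$ for $i\ll0$ and $\sigma_i=0$ for $i\gg0$. $\mathcal{F}(t)$ is the $\mathbb{C}(t)$-space with basis the Maya diagrams, with the bilinear form $\langle\cdot,\cdot\rangle$ making them orthonormal. Operators: $\psi^+_i(t)\sigma=(\sigma+\epsilon_i)\prod_{j>i}(-t)^{\sigma_j}$ if $\sigma_i=0$, else $0$; $\psi^-_i(t)\sigma=(\sigma-\epsilon_i)\prod_{j>i}(-t)^{-\sigma_j}$ if $\sigma_i=1$, else $0$; $E_{ij}(t)=(1-t)\psi_i^-(t)\psi_j^+(t)$; $A(x;t)=1+\sum_{r>0}\sum_{i_1<j_1<\cdots<i_r<j_r}(xt)^{j_1-i_1+\cdots+j_r-i_r}E_{i_1j_1}(t)\cdots E_{i_rj_r}(t)$, and $A^{-1}(x;t)$ is its inverse as a formal power series in $x$ with coefficients in $\operatorname{End}\mathcal{F}(t)$. Six-vertex row configurations: the allowed vertices (W,N,E,S) and weights are $\Omega(0,0,0,0)=\omega_1$, $\Omega(1,1,1,1)=\omega_2$, $\Omega(0,1,0,1)=\omega_3$,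 $\Omega(1,0,1,0)=\omega_4$, $\Omega(1,0,0,1)=\omega_5$, $\Omega(0,1,1,0)=\omega_6$, all other tuples having weight $0$. A row configuration from $\sigma$ (top) to $\sigma'$ (bottom) is $h:\mathbb{Z}\to\{0,1\}$ with $h_i=0$ for $|i|$ large and $(h_{i-1},\sigma_i,h_i,\sigma'_i)$ allowed for every $i$. *)

From HB Require Import structures.
From mathcomp Require Import all_boot all_order all_algebra.
From mathcomp Require Import algC fraction.
From mathcomp Require Import boolp classical_sets fsbigop.

Set Implicit Arguments.
Unset Strict Implicit.
Unset Printing Implicit Defensive.

Import Order.TTheory GRing.Theory Num.Theory.
Local Open Scope ring_scope.
Local Open Scope classical_set_scope.

Definition Ct : fieldType := {fraction {poly algC}}.
Definition tC : Ct := FracField.tofrac ('X : {poly algC}).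

Definition state := int -> bool.

Definition maya : set state :=
  [set s : state | (exists N : int, forall i, (i <= N)%R -> s i)
         /\ (exists N : int, forall i, (N <= i)%R -> ~~ s i)].

Definition upd (s : state) (i : int) (b : bool) : state :=
  fun j => if j == i then b else s j.

Section Fock.
Variables (K : fieldType) (t : K).

(* An operator on F(t) is recorded by its matrix elements:                   *)
(*   op_ M s' s = < s' , M s >  for Maya diagrams s, s'.                    *)
Definition op := state -> state -> K.

Definition op1 : op := fun s' s => if s' == s then 1 else 0.

Definition opmul (M N : op) : op :=
  fun s' s => \sum_(tau \in maya) M s' tau * N tau s.

Definition opscale (c : K) (M : op) : op := fun s' s => c * M s' s.

Definition psi_plus (i : int) : op :=
  fun s' s =>
    if ~~ s i && (s' == upd s i true)
    then \big[*%R/1%R]_(j \in [set j : int | (i < j)%R]) ((- t) ^+ s j)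
    else 0.

Definition psi_minus (i : int) : op :=
  fun s' s =>
    if s i && (s' == upd s i false)
    then \big[*%R/1%R]_(j \in [set j : int | (i < j)%R]) ((- t) ^- s j)
    else 0.

Definition Eop (i j : int) : op := opscale (1 - t) (opmul (psi_minus i) (psi_plus j)).

Fixpoint interlaced (p : seq (int * int)) : bool :=
  match p with
  | [::] => true
  | (i, j) :: q =>
      (i < j)%R && (if q is (i', _) :: _ then (j < i')%R else true) && interlaced q
  end.

Definition pweight (p : seq (int * int)) : int := \sum_(ij <- p) (ij.2 - ij.1).

Definition Eprod (p : seq (int * int)) : op :=
  foldr (fun ij M => opmul (Eop ij.1 ij.2) M) op1 p.

(* Coefficient of x^n in A(x;t) = 1 + sum_{r>0} sum (xt)^{sum (j_k - i_k)} E ... E *)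
Definition Acoef (n : nat) : op :=
  fun s' s =>
    (if n == 0%N then op1 s' s else 0) +
    \sum_(p \in [set p : seq (int * int) |
               [/\ (0 < size p)%N, interlaced p & pweight p = n%:Z]])
      t ^+ n * Eprod p s' s.

(* Coefficients of the inverse power series A^{-1}(x;t):                     *)
Fixpoint Ainv_upto (n : nat) : seq op :=
  match n with
  | 0 => [:: op1]
  | m.+1 =>
      let L := Ainv_upto m in
      rcons L (fun s' s =>
        - \sum_(k < m.+1) opmul (Acoef k.+1) (nth op1 L (m - k)) s' s)
  end.

Definition Ainvcoef (n : nat) : op := nth op1 (Ainv_upto n) n.

End Fock.

Definition allowed (w n e s : bool) : bool :=
  match w, n, e, s with
  | false, false, false, false => true
  | true, true, true, true => true
  | false, true, false, true => true
  | true, false, true, false => true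
  | true, false, false, true => true
  | false, true, true, false => true
  | _, _, _, _ => false
  end.

Definition Omega (R : nzRingType) (w1 w2 w3 w4 w5 w6 : R) (w n e s : bool) : R :=
  match w, n, e, s with
  | false, false, false, false => w1
  | true, true, true, true => w2
  | false, true, false, true => w3
  | true, false, true, false => w4
  | true, false, false, true => w5
  | false, true, true, false => w6
  | _, _, _, _ => 0
  end.

Definition rowconf (s s' : state) : set state :=
  [set h : state | (exists N : int, forall i, (N <= `|i|)%R -> ~~ h i)
         /\ (forall i, allowed (h (i - 1)) (s i) (h i) (s' i))].

Definition rowsum (R : comNzRingType) (w1 w2 w3 w4 w5 w6 : R) (s s' : state) : R :=
  \sum_(h \in rowconf s s')
     \big[*%R/1%R]_(i \in [set: int]) Omega w1 w2 w3 w4 w5 w6 (h (i - 1)) (s i) (h i) (s' i).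

(* The coefficient of x^k in <s', A(x;t) s> is itself a six-vertex row
   partition function, with weights (1, -x, 1, tx, 1, -(1-t)x): the product
   E_{i_1 j_1} ... E_{i_r j_r} moves particles from i_l to j_l, and the signs
   of the psi's times (xt)^(j-i) are exactly the weight of a horizontal line
   running from i to j.  On a finite window outside which s and s' are the
   vacuum, both row sums are transfer-matrix products.  Stacking the A-row
   under the row of the statement and summing over the middle state gives the
   identity, by a local computation on the four states of the pair of west
   edges.  Hence the row sum of the statement is the inverse series
   A^{-1}(x;t), and comparing coefficients with the recursion defining the
   coefficients of A^{-1} proves the claim. *)

From HB Require Import structures.
From mathcomp Require Import all_boot all_order all_algebra.
From mathcomp Require Import algC fraction.
From mathcomp Require Import boolp classical_sets fsbigop.
From mathcomp Require Import zify ring.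
Set Implicit Arguments.
Unset Strict Implicit.
Unset Printing Implicit Defensive.
Import Order.TTheory GRing.Theory Num.Theory.
Local Open Scope ring_scope.
Local Open Scope classical_set_scope.

Lemma fsbig_seq_supp (R : eqType) (idx : R) (op : Monoid.com_law idx)
  (T : choiceType) (P : set T) (F : T -> R) (r : seq T) :
  uniq r -> (forall x, P x -> F x <> idx -> x \in r) ->
  (forall x, x \in r -> ~ P x -> F x = idx) ->
  \big[op/idx]_(x \in P) F x = \big[op/idx]_(x <- r) F x.
Proof.
move=> ur supp_r out_P; rewrite fsbig_supp; apply: fsbig_fwiden => //.
- by move=> x [Px Fx]; apply: supp_r.
- move=> x [/= xr nP]; case: (pselect (P x)) => Px; last exact: out_P.
  by apply: contrapT => Fx; apply: nP.
Qed.

Lemma fsbig_supp1 (R : eqType) (idx : R) (op : Monoid.com_law idx)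
  (T : choiceType) (P : set T) (F : T -> R) x0 :
  P x0 -> (forall x, P x -> x <> x0 -> F x = idx) ->
  \big[op/idx]_(x \in P) F x = F x0.
Proof.
move=> Px0 F_idx; rewrite (@fsbig_seq_supp _ _ _ _ _ _ [:: x0]) ?big_seq1 //.
- by move=> x Px Fx; rewrite mem_seq1; apply/eqP; apply: contra_notP Fx; exact: F_idx.
- by move=> x; rewrite mem_seq1 => /eqP ->.
Qed.

Fixpoint irange (a : int) (n : nat) : seq int :=
  if n is n'.+1 then a :: irange (a + 1) n' else [::].

Lemma mem_irange a n x : (x \in irange a n) = (a <= x) && (x < a + n%:Z).
Proof.
elim: n a => [|n IH] a /=; first by rewrite in_nil addr0; lia.
by rewrite in_cons IH; lia.
Qed.

Lemma uniq_irange a n : uniq (irange a n).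
Proof. by elim: n a => [|n IH] a //=; rewrite IH andbT mem_irange; lia. Qed.

Lemma size_irange a n : size (irange a n) = n.
Proof. by elim: n a => [|n IH] a //=; rewrite IH. Qed.

Lemma irangeD a m n : irange a (m + n) = irange a m ++ irange (a + m%:Z) n.
Proof.
elim: m a => [|m IH] a /=; first by rewrite addr0.
by rewrite IH; congr (_ :: _ ++ _); congr irange; lia.
Qed.

Lemma nth_irange a n k : (k < n)%N -> nth 0 (irange a n) k = a + k%:Z.
Proof.
elim: n a k => [|n IH] a [|k] //= lt_kn; first by rewrite addr0.
by rewrite IH //; lia.
Qed.

Lemma irange_absz_succ (i j : int) : i < j ->
  irange i (absz (j - i)%R) = i :: irange (i + 1) (absz (j - (i + 1))%R).
Proof. by move=> lt_ij; have -> : absz (j - i)%R = (absz (j - (i + 1))%R).+1 by lia. Qed.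

(** * Maya diagrams on a finite window *)

Definition vacuum_outside (a : int) (L : nat) (s : state) :=
  forall i, (i < a -> s i) /\ (a + L%:Z <= i -> ~~ s i).

Lemma maya_common_window s s' : maya s -> maya s' ->
  exists a L, vacuum_outside a L s /\ vacuum_outside a L s'.
Proof.
move=> [[N1 h1] [M1 k1]] [[N2 h2] [M2 k2]].
exists (Num.min N1 N2), (absz (Num.max M1 M2 - Num.min N1 N2)%R).
by split=> i; split=> hi; [apply: h1 | apply: k1 | apply: h2 | apply: k2]; lia.
Qed.

Lemma vacuum_outside_maya a L s : vacuum_outside a L s -> maya s.
Proof.
move=> vs; split; first by exists (a - 1) => i hi; apply: (vs i).1; lia.
by exists (a + L%:Z) => i; apply: (vs i).2.
Qed.

Definition state_of (a : int) (l : seq bool) : state :=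
  fun i => if i < a then true else nth false l (absz (i - a)%R).

Definition window (a : int) (L : nat) (s : state) : seq bool := map s (irange a L).

Lemma size_window a L s : size (window a L s) = L.
Proof. by rewrite size_map size_irange. Qed.

Lemma vacuum_state_of a l : vacuum_outside a (size l) (state_of a l).
Proof.
move=> i; split=> hi; rewrite /state_of; first by rewrite hi.
by rewrite ifF ?nth_default //; lia.
Qed.

Lemma state_of_window a L s : vacuum_outside a L s -> state_of a (window a L s) = s.
Proof.
move=> vs; apply/funext => i; rewrite /state_of.
case: ifP => hi; first by rewrite (vs i).1.
case: (ltnP (absz (i - a)%R) L) => hk.
  by rewrite (nth_map 0) ?size_irange // nth_irange //; congr s; lia.
by rewrite nth_default ?size_window //; apply/esym/negbTE/(vs i).2; lia.
Qed.

Lemma eq_window a L s s' : vacuum_outside a L s -> vacuum_outside a L s' ->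
  (window a L s == window a L s') = (s == s').
Proof.
move=> vs vs'; apply/eqP/eqP => [eq_w|-> //].
by rewrite -(state_of_window vs) -(state_of_window vs') eq_w.
Qed.

Lemma window_state_of a l : window a (size l) (state_of a l) = l.
Proof.
apply: (@eq_from_nth _ false); rewrite size_window // => k hk.
rewrite (nth_map 0) ?size_irange // nth_irange // /state_of ifF; last by lia.
by congr nth; lia.
Qed.

Lemma state_of_head a b l : state_of a (b :: l) a = b.
Proof. by rewrite /state_of ltxx subrr. Qed.

Lemma state_of_cons a b l i : a + 1 <= i -> state_of a (b :: l) i = state_of (a + 1) l i.
Proof.
move=> hi; rewrite /state_of !ifF; try lia.
by have -> : absz (i - a)%R = (absz (i - (a + 1))%R).+1 by lia.
Qed.

Fixpoint bool_seqs (L : nat) : seq (seq bool) :=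
  if L is L'.+1 then [seq false :: l | l <- bool_seqs L'] ++ [seq true :: l | l <- bool_seqs L']
  else [:: [::]].

Lemma mem_bool_seqs L l : (l \in bool_seqs L) = (size l == L).
Proof.
elim: L l => [|L IH] [|b l] //=; rewrite mem_cat.
  by apply/negbTE; rewrite negb_or; apply/andP; split; apply/mapP => -[].
rewrite eqSS -IH; apply/orP/idP => [[]|l_in]; first by case/mapP => l' ? [_ ->].
  by case/mapP => l' ? [_ ->].
by case: b; [right | left]; apply/mapP; exists l.
Qed.

Lemma uniq_bool_seqs L : uniq (bool_seqs L).
Proof.
elim: L => [|L IH] //=; rewrite cat_uniq !map_inj_uniq; try by move=> x y [].
by rewrite IH andbT /=; apply/hasPn => l /mapP[x _ ->]; apply/mapP => -[y _].
Qed.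

Lemma fsbig_maya_window (R : eqType) (idx : R) (op : Monoid.com_law idx)
  a L (F : state -> R) :
  (forall tau, maya tau -> F tau <> idx -> vacuum_outside a L tau) ->
  \big[op/idx]_(tau \in maya) F tau = \big[op/idx]_(l <- bool_seqs L) F (state_of a l).
Proof.
move=> F_supp; rewrite (@fsbig_seq_supp _ _ _ _ _ _ (map (state_of a) (bool_seqs L))).
- by rewrite big_map.
- rewrite map_inj_in_uniq ?uniq_bool_seqs // => l1 l2.
  rewrite !mem_bool_seqs => /eqP <- /eqP eq_size eq_l.
  by rewrite -(window_state_of a l1) -(window_state_of a l2) eq_l eq_size.
- move=> tau mtau /(F_supp _ mtau) vtau; apply/mapP; exists (window a L tau).
    by rewrite mem_bool_seqs size_window.
  by rewrite state_of_window.
- move=> _ /mapP[l _ ->] []; exact: vacuum_outside_maya (vacuum_state_of a l).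
Qed.

(** * Row partition functions as transfer-matrix products *)

Lemma finsupp_false_left (h : state) (N c : int) :
  (forall i, N <= `|i| -> ~~ h i) -> (forall j, j <= c -> h j -> h (j - 1)) ->
  forall i, i <= c -> ~~ h i.
Proof.
move=> h_fin h_prev i le_ic; apply/negP => hi.
have h_down (n : nat) : h (i - n%:Z).
  elim: n => [|n IH]; first by rewrite subr0.
  have -> : i - n.+1%:Z = (i - n%:Z) - 1 by lia.
  by apply: h_prev => //; lia.
by apply/negP: (h_down (`|N| + `|i|)%N); apply: h_fin; lia.
Qed.

Lemma finsupp_false_right (h : state) (N c : int) :
  (forall i, N <= `|i| -> ~~ h i) -> (forall j, c <= j -> h j -> h (j + 1)) ->
  forall i, c <= i -> ~~ h i.
Proof.
move=> h_fin h_next i le_ci; apply/negP => hi.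
have h_up (n : nat) : h (i + n%:Z).
  elim: n => [|n IH]; first by rewrite addr0.
  have -> : i + n.+1%:Z = (i + n%:Z) + 1 by lia.
  by apply: h_next => //; lia.
by apply/negP: (h_up (`|N| + `|i|)%N); apply: h_fin; lia.
Qed.

Lemma Omega_eq0 (R : nzRingType) (w1 w2 w3 w4 w5 w6 : R) w n e s :
  ~~ allowed w n e s -> Omega w1 w2 w3 w4 w5 w6 w n e s = 0.
Proof. by case: w; case: n; case: e; case: s. Qed.

Lemma allowed_east_uniq w n e e' s : allowed w n e s -> allowed w n e' s -> e = e'.
Proof. by case: w; case: n; case: e; case: e'; case: s. Qed.

(* Transfer-matrix evaluation of the row segment [a, a + L): [g] is the
   horizontal edge entering at [a] from the west, and the edge leaving at the
   east end is empty. *)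
Fixpoint segment_pf (R : nzRingType) (W : bool -> bool -> bool -> bool -> R)
  (g : bool) (a : int) (L : nat) (s s' : state) : R :=
  if L is L'.+1 then
    W g (s a) false (s' a) * segment_pf W false (a + 1) L' s s' +
    W g (s a) true (s' a) * segment_pf W true (a + 1) L' s s'
  else (if g then 0 else 1).

Lemma eq_segment_pf (R : nzRingType) W g a L (s1 s1' s2 s2' : state) :
  (forall i, i \in irange a L -> s1 i = s2 i /\ s1' i = s2' i) ->
  @segment_pf R W g a L s1 s1' = segment_pf W g a L s2 s2'.
Proof.
elim: L g a => [|L IH] g a //= eq_s.
have [-> ->] := eq_s a (mem_head _ _).
by rewrite !(IH _ (a + 1)) // => i hi; apply: eq_s; rewrite in_cons hi orbT.
Qed.

Section RowConfigurations.
Variables (a : int) (L : nat) (s s' : state).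
Hypotheses (vs : vacuum_outside a L s) (vs' : vacuum_outside a L s').

(* The horizontal edge [h i] lies between the sites [i] and [i + 1]. *)
Definition empty_outside (h : state) :=
  forall i, i < a \/ a + L%:Z - 1 <= i -> ~~ h i.

Lemma rowconf_empty_outside h : rowconf s s' h -> empty_outside h.
Proof.
move=> [[N h_fin] h_al] i [lt_ia|le_i].
  apply: (finsupp_false_left (c := a - 1) h_fin _ (i := i)) => [j le_j hj|]; last by lia.
  have := h_al j; rewrite hj (vs j).1 ?(vs' j).1; try lia.
  by case: (h (j - 1)).
apply: (finsupp_false_right (c := a + L%:Z - 1) h_fin _ (i := i)) => [j le_j hj|]; last by lia.
have := h_al (j + 1); rewrite addrK hj.
rewrite (negbTE ((vs (j + 1)).2 _)) ?(negbTE ((vs' (j + 1)).2 _)); try lia.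
by case: (h (j + 1)).
Qed.

Lemma vertex_outside h i : empty_outside h -> i \notin irange a L ->
  [/\ h (i - 1) = false, h i = false & s i = (i < a) /\ s' i = (i < a)].
Proof.
move=> h0; rewrite mem_irange negb_and -!ltNge => out_i.
rewrite !(negbTE (h0 _ _)); try lia.
case/orP: out_i => [lt_ia|le_i]; first by rewrite lt_ia (vs i).1 ?(vs' i).1.
have -> : (i < a) = false by lia.
by rewrite (negbTE ((vs i).2 _)) ?(negbTE ((vs' i).2 _)) //; lia.
Qed.

Lemma rowconf_window h : empty_outside h ->
  (forall i, i \in irange a L -> allowed (h (i - 1)) (s i) (h i) (s' i)) ->
  rowconf s s' h.
Proof.
move=> h0 h_al; split; first by exists (`|a| + L%:Z + 2) => i hi; apply: h0; lia.
move=> i; case: (boolP (i \in irange a L)) => [|/(vertex_outside h0)[-> -> [-> ->]]].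
  exact: h_al.
by case: (i < a).
Qed.

Lemma rowconf_uniq h1 h2 : rowconf s s' h1 -> rowconf s s' h2 -> h1 = h2.
Proof.
move=> r1 r2; have Z1 := rowconf_empty_outside r1; have Z2 := rowconf_empty_outside r2.
have eq_h (k : nat) : (k <= L)%N -> h1 (a + k%:Z - 1) = h2 (a + k%:Z - 1).
  elim: k => [|k IH] le_kL.
    by rewrite (negbTE (Z1 _ _)) ?(negbTE (Z2 _ _)) //; left; lia.
  have -> : a + k.+1%:Z - 1 = a + k%:Z by lia.
  apply: (@allowed_east_uniq (h1 (a + k%:Z - 1)) (s (a + k%:Z)) _ _ (s' (a + k%:Z))).
    exact: r1.2.
  by rewrite IH; [exact: r2.2 | lia].
apply/funext => i; case: (boolP ((i < a) || (a + L%:Z - 1 <= i))) => hi.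
  by rewrite (negbTE (Z1 _ _)) ?(negbTE (Z2 _ _)) //; case/orP: hi; auto.
have -> : i = a + (absz (i - a + 1))%:Z - 1 by lia.
by apply: eq_h; lia.
Qed.

End RowConfigurations.

Section RowSum.
Variables (R : comNzRingType) (w2 w4 w5 w6 : R).
Local Notation W := (Omega 1 w2 1 w4 w5 w6).

Lemma rowprod_segment_pf a L s s' (h : state) :
  (forall i, i \in irange a L -> allowed (h (i - 1)) (s i) (h i) (s' i)) ->
  h (a + L%:Z - 1) = false ->
  \prod_(i <- irange a L) W (h (i - 1)) (s i) (h i) (s' i) = segment_pf W (h (a - 1)) a L s s'.
Proof.
elim: L a => [|L IH] a /= h_al h_end.
  by rewrite big_nil; move: h_end; rewrite addr0 => ->.
rewrite big_cons IH; first last.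
- by move: h_end; congr (h _ = _); lia.
- by move=> i hi; apply: h_al; rewrite in_cons hi orbT.
have h_al_a := h_al a (mem_head _ _); rewrite addrK.
have W_other e : e != h a -> W (h (a - 1)) (s a) e (s' a) = 0.
  by move=> ne; apply: Omega_eq0; apply: contra ne => /(allowed_east_uniq h_al_a) ->.
by case: (h a) W_other => [/(_ false)|/(_ true)] ->; rewrite ?mul0r ?add0r ?addr0.
Qed.

Lemma segment_pf_witness g a L s s' : segment_pf W g a L s s' != 0 ->
  exists h : state, [/\ h (a - 1) = g,
    (forall i, i < a - 1 \/ a + L%:Z - 1 <= i -> ~~ h i) &
    (forall i, i \in irange a L -> allowed (h (i - 1)) (s i) (h i) (s' i))].
Proof.
elim: L g a => [|L IH] g a /=.
  by case: g; rewrite ?eqxx // => _; exists (fun _ => false).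
suff step e : W g (s a) e (s' a) * segment_pf W e (a + 1) L s s' != 0 ->
   exists h : state, [/\ h (a - 1) = g,
    (forall i, i < a - 1 \/ a + L.+1%:Z - 1 <= i -> ~~ h i) &
    (forall i, i \in irange a L.+1 -> allowed (h (i - 1)) (s i) (h i) (s' i))].
  have [W0|W0] := eqVneq (W g (s a) false (s' a) * segment_pf W false (a + 1) L s s') 0.
    by rewrite W0 add0r => /step.
  by move=> _; apply: step W0.
move=> W_ne0.
have We : W g (s a) e (s' a) != 0 by apply: contraNneq W_ne0 => ->; rewrite mul0r.
have [|h [h_a h_out h_al]] := IH e (a + 1).
  by apply: contraNneq W_ne0 => ->; rewrite mulr0.
exists (upd h (a - 1) g); split; first by rewrite /upd eqxx.
  move=> i hi; rewrite /upd; case: eqP => [?|_]; first by subst; lia.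
  by apply: h_out; lia.
move=> i; rewrite in_cons => /orP[/eqP ->|hi].
  rewrite /upd eqxx ifF; last by lia.
  move: h_a; rewrite addrK => ->.
  by apply: contraR We => /Omega_eq0 ->.
have := h_al i hi; move: hi; rewrite mem_irange /upd => hi.
by rewrite !ifF //; lia.
Qed.

Section Window.
Variables (a : int) (L : nat) (s s' : state).
Hypotheses (vs : vacuum_outside a L s) (vs' : vacuum_outside a L s').

Lemma rowprod_window (h : state) : empty_outside a L h ->
  \big[*%R/1%R]_(i \in [set: int]) W (h (i - 1)) (s i) (h i) (s' i) =
  \prod_(i <- irange a L) W (h (i - 1)) (s i) (h i) (s' i).
Proof.
move=> h0; apply: fsbig_seq_supp => [|i _|i _ []//]; first exact: uniq_irange.
apply: contra_notP => /negP /(vertex_outside vs vs' h0)[-> -> [-> ->]].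
by case: (i < a).
Qed.

Lemma rowsum_segment_pf : rowsum 1 w2 1 w4 w5 w6 s s' = segment_pf W false a L s s'.
Proof.
have rowprodE h : rowconf s s' h ->
    \big[*%R/1%R]_(i \in [set: int]) W (h (i - 1)) (s i) (h i) (s' i) =
    segment_pf W false a L s s'.
  move=> hr; have h0 := rowconf_empty_outside vs vs' hr.
  rewrite (rowprod_window h0) rowprod_segment_pf.
  - by rewrite (negbTE (h0 _ _)) //; left; lia.
  - by move=> i _; apply: hr.2.
  - by apply/negbTE/h0; right; lia.
have [pf0|pf_ne0] := eqVneq (segment_pf W false a L s s') 0.
  by rewrite /rowsum fsbig1 // => h hr; rewrite rowprodE.
have [h [h_a h_out h_al]] := segment_pf_witness pf_ne0.
have hr : rowconf s s' h.
  apply: (rowconf_window vs vs' _ h_al) => i [lt_ia|le_i]; last by apply: h_out; right.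
  by have [->|ne] := eqVneq i (a - 1); [rewrite h_a | apply: h_out; left; lia].
rewrite /rowsum (fsbig_supp1 _ hr) ?rowprodE // => h' hr' ne.
by exfalso; apply: ne; exact: (rowconf_uniq vs vs' hr' hr).
Qed.

End Window.
End RowSum.

Lemma rowconf_vacuum a L s s' h : vacuum_outside a L s' -> rowconf s s' h ->
  vacuum_outside a L s.
Proof.
move=> vs' [[N h_fin] h_al] i; split => hi.
  apply: contraT => si.
  have h_prev j : j <= i - 1 -> h j -> h (j - 1).
    move=> le_j hj; have := h_al j; rewrite hj (vs' j).1; last by lia.
    by case: (h (j - 1)); case: (s j).
  have := finsupp_false_left h_fin h_prev (lexx (i - 1)).
  by have := h_al i; rewrite (negbTE si) (vs' i).1 //; case: (h (i - 1)); case: (h i).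
apply/negP => si.
have h_next j : i <= j -> h j -> h (j + 1).
  move=> le_j hj; have := h_al (j + 1); rewrite addrK hj (negbTE ((vs' (j + 1)).2 _)); last by lia.
  by case: (h (j + 1)); case: (s (j + 1)).
have := finsupp_false_right h_fin h_next (lexx i).
by have := h_al i; rewrite si (negbTE ((vs' i).2 hi)); case: (h (i - 1)); case: (h i).
Qed.

Lemma rowsum_eq0 (R : comNzRingType) (w1 w2 w3 w4 w5 w6 : R) a L s s' :
  vacuum_outside a L s' -> ~ vacuum_outside a L s -> rowsum w1 w2 w3 w4 w5 w6 s s' = 0.
Proof.
move=> vs' nvs; rewrite /rowsum fsbig1 // => h hr.
by exfalso; apply: nvs; apply: rowconf_vacuum hr.
Qed.

(** * The action of products of the operators E_ij *)

Lemma maya_eq_except (r : seq int) (s s2 : state) : maya s ->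
  (forall k, k \notin r -> s2 k = s k) -> maya s2.
Proof.
move=> [[N hN] [M hM]] eq_s; set B := \sum_(y <- r) `|y|.
have notin_r k : B < `|k| -> k \notin r.
  rewrite {}/B {eq_s}; apply: contraTN; rewrite -leNgt.
  elim: r => [|y r IH] //=; rewrite in_cons big_cons.
  case/orP => [/eqP ->|/IH le_k]; first by rewrite lerDl sumr_ge0.
  by rewrite (le_trans le_k) // lerDr.
split.
  by exists (Num.min N (- B - 1)) => i hi; rewrite eq_s ?hN //; [lia | apply: notin_r; lia].
by exists (Num.max M (B + 1)) => i hi; rewrite eq_s ?hM //; [lia | apply: notin_r; lia].
Qed.

Lemma maya_upd s i b : maya s -> maya (upd s i b).
Proof.
by move=> ms; apply: (@maya_eq_except [:: i] s) => // k; rewrite mem_seq1 /upd => /negbTE ->.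
Qed.

Definition hop_sites (p : seq (int * int)) : seq int := flatten [seq [:: ij.1; ij.2] | ij <- p].

Definition hoppable (p : seq (int * int)) (s : state) := all (fun ij => s ij.1 && ~~ s ij.2) p.

Definition hop (p : seq (int * int)) (s : state) : state :=
  fun k => if k \in hop_sites p then ~~ s k else s k.

Lemma hop_sites_cons i j q : hop_sites ((i, j) :: q) = i :: j :: hop_sites q.
Proof. by []. Qed.

Lemma hop_nil s : hop [::] s = s.
Proof. by apply/funext => k; rewrite /hop in_nil. Qed.

Lemma hop_out p s k : k \notin hop_sites p -> hop p s k = s k.
Proof. by rewrite /hop => /negbTE ->. Qed.

Lemma mem_hop_sites p s k : (k \in hop_sites p) = (hop p s k != s k).
Proof. by rewrite /hop; case: ifP => _; [case: (s k) | rewrite eqxx]. Qed.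

Lemma maya_hop p s : maya s -> maya (hop p s).
Proof. by move=> ms; apply: (@maya_eq_except (hop_sites p) s) => // k /hop_out. Qed.

Lemma interlacedE p : interlaced p = sorted <%R (hop_sites p).
Proof.
elim: p => [|[i j] q IH] //=; rewrite IH.
by case: q {IH} => [|[i' j'] q] /=; [rewrite !andbT | rewrite -!andbA].
Qed.

Lemma sorted_hop_sites_cons i j q : sorted <%R (hop_sites ((i, j) :: q)) ->
  [/\ i < j, forall x, x \in hop_sites q -> j < x & sorted <%R (hop_sites q)].
Proof.
rewrite hop_sites_cons /= => /andP[lt_ij].
by rewrite (path_sortedE lt_trans) => /andP[/allP gt_j ->].
Qed.

Lemma sorted_hop_sites_lt p : sorted <%R (hop_sites p) -> all (fun ij => ij.1 < ij.2) p.
Proof.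
elim: p => [|[i j] p IH] // /sorted_hop_sites_cons[lt_ij _ sorted_p].
by rewrite /= lt_ij IH.
Qed.

Lemma sorted_hop_uniq p q s : sorted <%R (hop_sites p) -> sorted <%R (hop_sites q) ->
  hop p s = hop q s -> p = q.
Proof.
move=> sp sq eq_hop.
have eq_sites : hop_sites p = hop_sites q.
  by apply: (irr_sorted_eq lt_trans ltxx) => // k; rewrite !(mem_hop_sites _ s) eq_hop.
elim: p q eq_sites {sp sq eq_hop} => [|[i j] p IH] [|[k l] q] //=.
by case=> -> -> /IH ->.
Qed.

Lemma fsprod_gt (R : comNzRingType) (f : bool -> R) (s : state) (i M : int) :
  f false = 1 -> (forall k, M <= k -> ~~ s k) ->
  \big[*%R/1%R]_(k \in [set k : int | i < k]) f (s k) =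
  \prod_(k <- irange (i + 1) (absz (M - (i + 1))%R)) f (s k).
Proof.
move=> f0 s_out; apply: fsbig_seq_supp; first exact: uniq_irange.
  move=> k /= lt_ik; rewrite mem_irange; case: (boolP (s k)) => [sk _|_ []//].
  by apply/andP; split; [lia | apply: contraTT sk => ?; apply: s_out; lia].
by move=> k; rewrite mem_irange /= => hk; case; lia.
Qed.

Section FermionAction.
Variables (K : fieldType) (t : K).
Hypothesis t0 : t != 0.

Lemma mt_exp_neq0 (b : bool) : (- t) ^+ b != 0.
Proof. by rewrite expf_neq0 // oppr_eq0. Qed.

Lemma psi_sign_cancel i j tau : maya tau -> i < j -> ~~ tau j ->
  \big[*%R/1%R]_(k \in [set k : int | i < k]) ((- t) ^- upd tau j true k) *
  \big[*%R/1%R]_(k \in [set k : int | j < k]) ((- t) ^+ tau k) =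
  (- t)^-1 * \prod_(k <- irange (i + 1) (absz (j - (i + 1))%R)) ((- t) ^+ tau k)^-1.
Proof.
move=> [_ [M tau_out]] lt_ij tau_j; set M' := Num.max M (j + 1).
have tau_out' k : M' <= k -> ~~ tau k by move=> ?; apply: tau_out; lia.
have r_out k : M' <= k -> ~~ upd tau j true k.
  by move=> ?; rewrite /upd ifF; [apply: tau_out' | lia].
rewrite (fsprod_gt (f := fun b : bool => (- t) ^- b) _ _ r_out) ?invr1 //.
rewrite (fsprod_gt (f := fun b : bool => (- t) ^+ b) _ _ tau_out') //.
set m := absz (j - (i + 1))%R; set n := absz (M' - (j + 1))%R.
have -> : absz (M' - (i + 1))%R = (m + n.+1)%N by lia.
have -> : irange (i + 1) (m + n.+1) = irange (i + 1) m ++ j :: irange (j + 1) n.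
  by rewrite irangeD /=; have -> : i + 1 + m%:Z = j by lia.
rewrite big_cat big_cons /= {2}/upd eqxx expr1.
have upd_out k : k \in irange (i + 1) m \/ k \in irange (j + 1) n -> upd tau j true k = tau k.
  by rewrite !mem_irange /upd => hk; rewrite ifF //; lia.
have upd_below : \prod_(k <- irange (i + 1) m) (- t) ^- upd tau j true k =
    \prod_(k <- irange (i + 1) m) ((- t) ^+ tau k)^-1.
  by apply: eq_big_seq => k hk; rewrite upd_out //; left.
have upd_above : \prod_(k <- irange (j + 1) n) (- t) ^- upd tau j true k =
    \prod_(k <- irange (j + 1) n) ((- t) ^+ tau k)^-1.
  by apply: eq_big_seq => k hk; rewrite upd_out //; right.
have cancel : \prod_(k <- irange (j + 1) n) ((- t) ^+ tau k)^-1 *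
    \prod_(k <- irange (j + 1) n) (- t) ^+ tau k = 1.
  by rewrite -big_split big1 // => k _; rewrite /= mulVf // mt_exp_neq0.
by rewrite upd_below upd_above -!mulrA cancel mulr1 mulrC.
Qed.

Definition Eweight (i j : int) (s : state) : K :=
  (1 - t) * ((- t)^-1 * \prod_(k <- irange (i + 1) (absz (j - (i + 1))%R)) ((- t) ^+ s k)^-1).

Lemma Eop_action i j s' tau : maya tau -> i < j ->
  Eop t i j s' tau =
  if tau i && ~~ tau j && (s' == upd (upd tau j true) i false) then Eweight i j tau else 0.
Proof.
move=> mtau lt_ij; rewrite /Eop /opscale /opmul.
rewrite (@fsbig_supp1 _ _ _ _ _ _ (upd tau j true)); first last.
- move=> x _ ne; rewrite /psi_plus ifF ?mulr0 //.
  by apply: contra_notF ne => /andP[_ /eqP].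
- exact: maya_upd.
rewrite /psi_minus /psi_plus eqxx andbT.
have -> : upd tau j true i = tau i by rewrite /upd ifF //; lia.
case: (boolP (tau j)) => [|tau_j]; rewrite ?andbF ?mulr0 ?mul0r //= andbT.
case: (tau i); rewrite ?mul0r ?mulr0 //=.
case: (s' == _); rewrite ?mul0r ?mulr0 //.
by rewrite psi_sign_cancel.
Qed.

Definition Eprod_weight (p : seq (int * int)) (s : state) : K :=
  \prod_(ij <- p) Eweight ij.1 ij.2 s.

Lemma Eprod_action p s s' : maya s -> interlaced p ->
  Eprod t p s' s = if hoppable p s && (s' == hop p s) then Eprod_weight p s else 0.
Proof.
elim: p s' => [|[i j] q IH] s' ms; first by rewrite /= hop_nil /op1 /Eprod_weight big_nil.
rewrite interlacedE => /sorted_hop_sites_cons[lt_ij gt_j sorted_q].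
rewrite /= /opmul (@fsbig_supp1 _ _ _ _ _ _ (hop q s)); first last.
- move=> x _ ne; rewrite IH ?interlacedE // ifF ?mulr0 //.
  by apply: contra_notF ne => /andP[_ /eqP].
- exact: maya_hop.
rewrite IH ?interlacedE // eqxx andbT Eop_action //; last exact: maya_hop.
have notin_q k : k <= j -> k \notin hop_sites q.
  by move=> le_kj; apply/negP => /gt_j; rewrite ltNge le_kj.
rewrite !hop_out ?notin_q ?(ltW lt_ij) //.
have -> : Eweight i j (hop q s) = Eweight i j s.
  congr (_ * (_ * _)); apply: eq_big_seq => k; rewrite mem_irange => hk.
  by rewrite hop_out // notin_q; lia.
rewrite /hoppable /= -/(hoppable q s) /Eprod_weight big_cons /= -/(Eprod_weight q s).
case si: (s i) => /=; last by rewrite mul0r.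
case sj: (s j) => /=; first by rewrite mul0r.
have -> : upd (upd (hop q s) j true) i false = hop ((i, j) :: q) s.
  apply/funext => k; rewrite /upd /hop hop_sites_cons !in_cons.
  by case: eqP => [->|_]; [rewrite si | case: eqP => [->|_]; [rewrite sj orbT|]].
by case: (hoppable q s); case: (s' == _); rewrite ?mul0r ?mulr0.
Qed.

End FermionAction.

(** * The coefficients of A(x;t) as a row partition function *)

(* A list of hops [p] read as arcs of the horizontal line: [closed_arcs] says
   that the row segment [a, a + L) of [s] over [s'] is crossed exactly by the
   arcs [i -> j] of [p]; [open_arc] says that it is entered from the west by an
   arc ending at [j], followed by the closed arcs [p]. *)
Definition closed_arcs (a : int) (L : nat) (s s' : state) (p : seq (int * int)) :=
  [/\ sorted <%R (hop_sites p), {subset hop_sites p <= irange a L}, hoppable p s &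
      {in irange a L, s' =1 hop p s}].

Definition open_arc (a : int) (L : nat) (s s' : state) (j : int) (p : seq (int * int)) :=
  [/\ j \in irange a L, ~~ s j, s' j,
      {in irange a L, forall i, i < j -> s' i = s i} &
      closed_arcs (j + 1) (absz (a + L%:Z - (j + 1))%R) s s' p].

Lemma hop_cons_out i j p s k : k != i -> k != j -> hop ((i, j) :: p) s k = hop p s k.
Proof. by rewrite /hop hop_sites_cons !in_cons => /negbTE -> /negbTE ->. Qed.

Lemma hop_cons_src i j p s : hop ((i, j) :: p) s i = ~~ s i.
Proof. by rewrite /hop hop_sites_cons mem_head. Qed.

Lemma hop_cons_dst i j p s : hop ((i, j) :: p) s j = ~~ s j.
Proof. by rewrite /hop hop_sites_cons !in_cons eqxx orbT. Qed.

Section ArcRecursion.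
Variables (s s' : state) (a : int) (L : nat).

Lemma closed_arcs0 b p : closed_arcs b 0 s s' p -> p = [::].
Proof.
by case: p => [|[i j] p] // [_ sub _ _]; have := sub i; rewrite hop_sites_cons mem_head => /(_ isT).
Qed.

Lemma closed_arcs_skip p : a \notin hop_sites p ->
  closed_arcs a L.+1 s s' p <-> s' a = s a /\ closed_arcs (a + 1) L s s' p.
Proof.
move=> a_out; split=> [[sp sub hp eq_s']|[s'a [sp sub hp eq_s']]].
  split; first by rewrite eq_s' ?mem_head ?hop_out.
  split=> // [x x_in|i i_in]; last by apply: eq_s'; rewrite in_cons i_in orbT.
  have := sub x x_in; rewrite in_cons => /orP[/eqP x_a|//].
  by move: a_out; rewrite -x_a x_in.
split=> // [x /sub x_in|i]; first by rewrite in_cons x_in orbT.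
by rewrite in_cons => /orP[/eqP ->|/eq_s' //]; rewrite hop_out.
Qed.

Lemma closed_arcs_start j p :
  closed_arcs a L.+1 s s' ((a, j) :: p) <-> [/\ s a, ~~ s' a & open_arc (a + 1) L s s' j p].
Proof.
have win : irange a L.+1 = a :: irange (a + 1) L by [].
split=> [[/sorted_hop_sites_cons[lt_aj gt_j sp] sub /andP[/andP[sa sj] hp] eq_s']|].
  have j_in : j \in irange (a + 1) L.
    by have := sub j; rewrite !mem_irange hop_sites_cons !in_cons eqxx orbT => /(_ isT); lia.
  have in_p x : x \in hop_sites p -> j < x /\ x < a + L%:Z + 1.
    move=> x_in; split; first exact: gt_j.
    by have := sub x; rewrite mem_irange hop_sites_cons !in_cons x_in !orbT => /(_ isT); lia.
  split=> //; first by rewrite eq_s' ?mem_head // hop_cons_src sa.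
  split=> //; first by rewrite eq_s' ?hop_cons_dst ?sj // win in_cons j_in orbT.
  - move=> i i_in lt_ij; move: (i_in); rewrite mem_irange => bnd_i.
    rewrite eq_s' ?win ?in_cons ?i_in ?orbT // hop_cons_out ?hop_out //; try lia.
    by apply/negP => /gt_j; lia.
  split=> // [x /in_p|i]; rewrite mem_irange; first lia.
  move: j_in; rewrite mem_irange => bnd_j bnd_i.
  rewrite eq_s' ?hop_cons_out // ?mem_irange; lia.
move=> [sa s'a [j_in sj s'j eq_pre [sp sub hp eq_post]]].
move: j_in; rewrite mem_irange => bnd_j.
have gt_j x : x \in hop_sites p -> j < x by move/sub; rewrite mem_irange; lia.
split.
- rewrite hop_sites_cons /= (path_sortedE lt_trans) sp andbT.
  by apply/andP; split; [lia | apply/allP => x /gt_j].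
- move=> x; rewrite mem_irange hop_sites_cons !in_cons.
  by case/orP=> [/eqP->|/orP[/eqP->|/sub]]; rewrite ?mem_irange; lia.
- by rewrite /hoppable /= sa sj.
move=> i; rewrite win in_cons => /orP[/eqP->|]; first by rewrite hop_cons_src sa (negbTE s'a).
rewrite mem_irange => bnd_i.
have [lt_ij|gt_ij|->] := ltgtP i j.
- rewrite hop_cons_out ?hop_out ?eq_pre ?mem_irange //; try lia.
  by apply/negP => /gt_j; lia.
- by rewrite hop_cons_out ?eq_post // ?mem_irange; lia.
by rewrite hop_cons_dst s'j sj.
Qed.

Lemma open_arc_skip j p : j != a ->
  open_arc a L.+1 s s' j p <-> s' a = s a /\ open_arc (a + 1) L s s' j p.
Proof.
move=> j_a; have win : irange a L.+1 = a :: irange (a + 1) L by [].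
rewrite /open_arc.
have -> : absz (a + L.+1%:Z - (j + 1))%R = absz (a + 1 + L%:Z - (j + 1))%R by lia.
split=> [[j_in sj s'j eq_pre cp]|[s'a [j_in sj s'j eq_pre cp]]].
  move: j_in; rewrite win in_cons (negbTE j_a) /= => j_in.
  move: (j_in); rewrite mem_irange => bnd_j.
  split; first by apply: eq_pre; rewrite ?mem_head //; lia.
  by split=> // i i_in; apply: eq_pre; rewrite win in_cons i_in orbT.
split=> //; first by rewrite win in_cons j_in orbT.
by move=> i; rewrite win in_cons => /orP[/eqP->//|]; apply: eq_pre.
Qed.

Lemma open_arc_end p :
  open_arc a L.+1 s s' a p <-> [/\ ~~ s a, s' a & closed_arcs (a + 1) L s s' p].
Proof.
rewrite /open_arc; have -> : absz (a + L.+1%:Z - (a + 1))%R = L by lia.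
split=> [[_ sa s'a _ cp] //|[sa s'a cp]].
by split=> // [|i]; [rewrite mem_head | rewrite mem_irange; lia].
Qed.

End ArcRecursion.

Lemma closed_arcs_first s s' a L p : closed_arcs a L s s' p -> a \in hop_sites p ->
  exists j p', p = (a, j) :: p'.
Proof.
case: p => [|[i j] p'] // [/sorted_hop_sites_cons[lt_ij gt_j _] sub _ _].
have := sub i; rewrite hop_sites_cons mem_head mem_irange => /(_ isT) bnd_i.
by rewrite !in_cons => /orP[/eqP <-|/orP[/eqP a_j|/gt_j]]; [exists j, p' | lia | lia].
Qed.

Section ArcWeights.
Variables (K : fieldType) (t : K).

Definition WA := Omega (1 : {poly K}) (- 'X) 1 (t%:P * 'X) 1 (- ((1 - t)%:P * 'X)).

Definition carry_weight (a j : int) (s : state) : {poly K} :=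
  \prod_(k <- irange a (absz (j - a))%R) (if s k then - 'X else t%:P * 'X).

Definition arcs_weight (p : seq (int * int)) (s : state) : {poly K} :=
  \prod_(ij <- p) (- ((1 - t)%:P * 'X) * carry_weight (ij.1 + 1) ij.2 s).

Lemma carry_weight_id a s : carry_weight a a s = 1.
Proof. by rewrite /carry_weight subrr big_nil. Qed.

Lemma carry_weight_cons a j s : a < j ->
  carry_weight a j s = (if s a then - 'X else t%:P * 'X) * carry_weight (a + 1) j s.
Proof. by move=> lt_aj; rewrite /carry_weight irange_absz_succ // big_cons. Qed.

Lemma segment_pf_arcs L : forall a s s',
  (forall p, closed_arcs a L s s' p -> segment_pf WA false a L s s' = arcs_weight p s) /\
  (forall j p, open_arc a L s s' j p ->
     segment_pf WA true a L s s' = carry_weight a j s * arcs_weight p s).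
Proof.
elim: L => [|L IH] a s s'.
  by split=> [p /closed_arcs0 ->|j p []]; [rewrite /arcs_weight big_nil | rewrite in_nil].
have [IHc IHo] := IH (a + 1) s s'.
split=> [p cp|j p op] /=.
  case: (boolP (a \in hop_sites p)) => [/(closed_arcs_first cp)[j [p' def_p]]|a_out].
    move: cp; rewrite def_p closed_arcs_start => -[sa s'a op].
    rewrite sa (negbTE s'a) /= mul0r add0r (IHo _ _ op) /arcs_weight big_cons /=.
    by rewrite mulrA.
  case/(closed_arcs_skip _ _ _ a_out): cp => s'a cp.
  by rewrite s'a (IHc _ cp); case: (s a); rewrite /= mul1r mul0r addr0.
have [j_a|j_a] := eqVneq j a.
  move: op; rewrite j_a open_arc_end => -[sa s'a cp].
  by rewrite (negbTE sa) s'a /= mul1r mul0r addr0 (IHc _ cp) carry_weight_id mul1r.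
case/(open_arc_skip _ _ _ _ j_a): (op) => s'a op'.
have lt_aj : a < j by case: op => + _ _ _ _; rewrite mem_irange; lia.
rewrite s'a (IHo _ _ op') (carry_weight_cons _ lt_aj) -mulrA.
by case: (s a); rewrite /= mul0r add0r.
Qed.

Lemma segment_pf_neq0_arcs L : forall a s s',
  (segment_pf WA false a L s s' != 0 -> exists p, closed_arcs a L s s' p) /\
  (segment_pf WA true a L s s' != 0 -> exists j p, open_arc a L s s' j p).
Proof.
elim: L => [|L IH] a s s'; first by split=> /=; [exists [::] | rewrite eqxx].
have [IHc IHo] := IH (a + 1) s s'.
have skip_closed : s' a = s a -> segment_pf WA false (a + 1) L s s' != 0 ->
    exists p, closed_arcs a L.+1 s s' p.
  move=> s'a /IHc[p cp]; exists p; apply/closed_arcs_skip => //.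
  by case: cp => _ sub _ _; apply/negP => /sub; rewrite mem_irange; lia.
have skip_open : s' a = s a -> segment_pf WA true (a + 1) L s s' != 0 ->
    exists j p, open_arc a L.+1 s s' j p.
  move=> s'a /IHo[j [p op]]; exists j, p; apply/open_arc_skip => //.
  by case: op => + _ _ _ _; rewrite mem_irange; lia.
have tail_neq0 (c x : {poly K}) : c * x != 0 -> x != 0.
  by apply: contraNneq => ->; rewrite mulr0.
split=> /=; case sa: (s a); case s'a: (s' a);
  rewrite /= ?mul0r ?mul1r ?add0r ?addr0 ?eqxx // => pf_neq0.
- by apply: skip_closed; rewrite ?sa ?s'a.
- have [j [p op]] := IHo (tail_neq0 _ _ pf_neq0).
  by exists ((a, j) :: p); apply/closed_arcs_start; rewrite sa s'a.
- by apply: skip_closed; rewrite ?sa ?s'a.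
- by apply: skip_open (tail_neq0 _ _ pf_neq0); rewrite sa s'a.
- have [p cp] := IHc pf_neq0.
  by exists a, p; apply/open_arc_end; rewrite sa s'a.
- by apply: skip_open (tail_neq0 _ _ pf_neq0); rewrite sa s'a.
Qed.

End ArcWeights.

Definition hop_length (p : seq (int * int)) : nat := \sum_(ij <- p) absz (ij.2 - ij.1)%R.

Lemma pweight_hop_length p : all (fun ij => ij.1 < ij.2) p -> pweight p = (hop_length p)%:Z.
Proof.
elim: p => [|[i j] p IH] /=; first by rewrite /pweight /hop_length !big_nil.
case/andP=> lt_ij /IH IHp; rewrite /pweight /hop_length !big_cons -/(pweight p).
by rewrite -/(hop_length p) IHp PoszD /=; congr (_ + _); lia.
Qed.

Lemma hop_length_gt0 p : all (fun ij => ij.1 < ij.2) p -> (0 < size p)%N -> (0 < hop_length p)%N.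
Proof.
case: p => [|[i j] p] //= /andP[lt_ij _] _; rewrite /hop_length big_cons addn_gt0 /=.
by apply/orP; left; lia.
Qed.

Section ArcCoefficients.
Variables (K : fieldType) (t : K).
Hypothesis t0 : t != 0.

Lemma arc_weightE i j s : i < j ->
  - ((1 - t)%:P * 'X) * carry_weight t (i + 1) j s =
  (t ^+ absz (j - i)%R * Eweight t i j s)%:P * 'X ^+ absz (j - i)%R.
Proof.
move=> lt_ij; set r := irange (i + 1) (absz (j - (i + 1))%R).
have carryE : carry_weight t (i + 1) j s =
    (\prod_(k <- r) (t * ((- t) ^+ s k)^-1))%:P * 'X ^+ size r.
  rewrite /carry_weight -/r (eq_bigr (fun k => (t * ((- t) ^+ s k)^-1)%:P * 'X)).
    by rewrite big_split /= -rmorph_prod big_const_seq count_predT iter_mulr_1.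
  move=> k _; case: (s k); rewrite /= ?expr0 ?invr1 ?mulr1 //.
  by rewrite expr1 invrN mulrN divff // polyCN mulN1r.
have tmt : t * (- t)^-1 = -1 by rewrite invrN mulrN divff.
have constE : t ^+ (size r).+1 * Eweight t i j s =
    - (1 - t) * \prod_(k <- r) (t * ((- t) ^+ s k)^-1).
  rewrite /Eweight -/r big_split /= big_const_seq count_predT iter_mulr_1 exprS.
  transitivity ((1 - t) * (t * (- t)^-1) * (t ^+ size r * \prod_(k <- r) ((- t) ^+ s k)^-1)).
    by ring.
  by rewrite tmt mulrN1 mulNr.
have -> : absz (j - i)%R = (size r).+1 by rewrite size_irange; lia.
rewrite carryE constE polyCM polyCN exprS; ring.
Qed.

Lemma arcs_weightE p s : all (fun ij => ij.1 < ij.2) p ->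
  arcs_weight t p s = (t ^+ hop_length p * Eprod_weight t p s)%:P * 'X ^+ hop_length p.
Proof.
elim: p => [|[i j] p IH] /=.
  by rewrite /arcs_weight /hop_length /Eprod_weight !big_nil !expr0 mulr1 mul1r.
case/andP=> lt_ij /IH IHp; rewrite /arcs_weight big_cons -/(arcs_weight t p s) IHp.
rewrite /hop_length /Eprod_weight !big_cons -/(hop_length p) -/(Eprod_weight t p s) /=.
by rewrite arc_weightE // !exprD !polyCM; ring.
Qed.

End ArcCoefficients.

Lemma vacuum_outside_eq a L s s' i : vacuum_outside a L s -> vacuum_outside a L s' ->
  i \notin irange a L -> s' i = s i.
Proof.
move=> vs vs'; rewrite mem_irange negb_and -!ltNge => /orP[lt_ia|le_i].
  by rewrite (vs i).1 ?(vs' i).1.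
by rewrite (negbTE ((vs i).2 _)) ?(negbTE ((vs' i).2 _)) //; lia.
Qed.

Lemma closed_arcs_vacuum a L s s' p : vacuum_outside a L s -> vacuum_outside a L s' ->
  closed_arcs a L s s' p <-> [/\ sorted <%R (hop_sites p), hoppable p s & s' = hop p s].
Proof.
move=> vs vs'; split=> [[sp sub hp eq_s']|[sp hp e]].
  split=> //; apply/funext => i; case: (boolP (i \in irange a L)) => [/eq_s' //|i_out].
  by rewrite hop_out ?(vacuum_outside_eq vs vs') //; apply: contra i_out => /sub.
split=> // [x|i _]; last by rewrite e.
by rewrite (mem_hop_sites _ s) -e; apply: contraNT => x_out; rewrite (vacuum_outside_eq vs vs').
Qed.

Section AcoefRowSum.
Variables (K : fieldType) (t : K).
Hypothesis t0 : t != 0.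

Lemma segment_pf_coef a L s s' p k : closed_arcs a L s s' p ->
  (segment_pf (WA t) false a L s s')`_k =
  t ^+ hop_length p * Eprod_weight t p s * (k == hop_length p)%:R.
Proof.
move=> cp; rewrite ((segment_pf_arcs t L a s s').1 p cp) arcs_weightE ?coefCM ?coefXn //.
by case: cp => sp _ _ _; apply: sorted_hop_sites_lt.
Qed.

Lemma Acoef_hop a L s s' k p : maya s ->
  vacuum_outside a L s -> vacuum_outside a L s' ->
  [/\ (0 < size p)%N, interlaced p & pweight p = k%:Z] -> hoppable p s -> s' = hop p s ->
  Acoef t k s' s = (segment_pf (WA t) false a L s s')`_k.
Proof.
move=> ms vs vs' [sz ip pw] hp e; rewrite /Acoef.
have sp : sorted <%R (hop_sites p) by rewrite -interlacedE.
have kE : k = hop_length p.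
  by apply/eqP; rewrite -eqz_nat -pw pweight_hop_length // sorted_hop_sites_lt.
rewrite (@fsbig_supp1 _ _ _ _ _ _ p) //; last first.
  move=> q [_ iq _] ne; rewrite Eprod_action //.
  case: ifP => [/andP[hq /eqP eq_hop]|_]; last by rewrite mulr0.
  by exfalso; apply: ne; apply: (sorted_hop_uniq (s := s)); rewrite -?interlacedE // -eq_hop -e.
rewrite Eprod_action // hp e eqxx /= ifF ?add0r; last first.
  by apply/negbTE; rewrite kE -lt0n hop_length_gt0 // sorted_hop_sites_lt.
rewrite (segment_pf_coef k (p := p)) -?kE ?eqxx ?mulr1 //.
by apply/closed_arcs_vacuum => //; rewrite -e.
Qed.

Lemma Acoef_segment_pf a L s s' k : maya s ->
  vacuum_outside a L s -> vacuum_outside a L s' ->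
  Acoef t k s' s = (segment_pf (WA t) false a L s s')`_k.
Proof.
move=> ms vs vs'.
case: (pselect (exists p, [/\ (0 < size p)%N, interlaced p & pweight p = k%:Z] /\
                          hoppable p s /\ s' = hop p s)) => [[p [Pp [hp e]]]|none].
  exact: Acoef_hop Pp hp e.
rewrite /Acoef fsbig1 ?addr0; last first.
  move=> p [sz ip pw]; rewrite Eprod_action //.
  case: ifP => [/andP[hp /eqP e]|_]; last by rewrite mulr0.
  by exfalso; apply: none; exists p.
have [pf0|pf_ne0] := eqVneq (segment_pf (WA t) false a L s s') 0.
  rewrite pf0 coef0; case: eqP => // _; rewrite /op1; case: eqP => // eq_s.
  have c0 : closed_arcs a L s s' [::] by apply/closed_arcs_vacuum; rewrite // hop_nil eq_s.
  move: pf0; rewrite ((segment_pf_arcs t L a s s').1 _ c0) /arcs_weight big_nil.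
  by move/eqP; rewrite oner_eq0.
have [p cp] := (segment_pf_neq0_arcs t L a s s').1 pf_ne0.
rewrite (segment_pf_coef k cp).
have [sp hp e] := (closed_arcs_vacuum _ vs vs').1 cp.
case: p sp hp e {cp} => [|x p] sp hp e.
  rewrite e hop_nil /op1 eqxx /hop_length /Eprod_weight !big_nil expr0 !mul1r.
  by case: (k == 0%N).
have [km|km] := eqVneq k (hop_length (x :: p)).
  exfalso; apply: none; exists (x :: p); split=> //; split; rewrite ?interlacedE //.
  by rewrite pweight_hop_length ?km // sorted_hop_sites_lt.
rewrite mulr0; case: eqP => // _; rewrite /op1; case: eqP => // eq_s.
have : hop (x :: p) s = hop [::] s by rewrite hop_nil -e.
by move/sorted_hop_uniq => /(_ sp isT).
Qed.

End AcoefRowSum.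

(** * Inversion *)

Lemma segment_pf_coef0 (K : fieldType) (w2 w4 w5 w6 : {poly K}) : w6`_0 = 0 ->
  forall L a s s', (segment_pf (Omega 1 w2 1 w4 w5 w6) false a L s s')`_0 =
    (window a L s == window a L s')%:R.
Proof.
move=> w6_0; elim=> [|L IH] a s s' /=; first by rewrite coefC.
rewrite /window /= eqseq_cons -!/(window _ _ _).
case: (s a); case: (s' a); rewrite /= ?mul0r ?mul1r ?addr0 ?add0r ?IH ?coef0 //.
by rewrite coef0M w6_0 mul0r.
Qed.

Section TransferInverse.
Variables (K : fieldType) (t : K).

Definition WT := Omega (1 : {poly K}) (- (t%:P * 'X)) 1 'X 1 ((1 - t)%:P * 'X).
Local Notation WA := (WA t).

(* The A-row from [tau] down to [s'] stacked under the T-row from [s] down to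
   [tau], summed over the middle row [tau] on the window, with west edges [g]
   and [h]. *)
Definition transfer_prod g h a L s s' : {poly K} :=
  \sum_(l <- bool_seqs L)
    segment_pf WA g a L (state_of a l) s' * segment_pf WT h a L s (state_of a l).

Lemma segment_pf_top_cons W g a L b l s' :
  @segment_pf {poly K} W g a L.+1 (state_of a (b :: l)) s' =
  W g b false (s' a) * segment_pf W false (a + 1) L (state_of (a + 1) l) s' +
  W g b true (s' a) * segment_pf W true (a + 1) L (state_of (a + 1) l) s'.
Proof.
rewrite /= state_of_head
  !(@eq_segment_pf _ W _ (a + 1) L (state_of a (b :: l)) s' (state_of (a + 1) l) s') //;
  by move=> i; rewrite mem_irange => /andP[hi _]; rewrite state_of_cons //; lia.
Qed.

Lemma segment_pf_bottom_cons W g a L b l s :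
  @segment_pf {poly K} W g a L.+1 s (state_of a (b :: l)) =
  W g (s a) false b * segment_pf W false (a + 1) L s (state_of (a + 1) l) +
  W g (s a) true b * segment_pf W true (a + 1) L s (state_of (a + 1) l).
Proof.
rewrite /= state_of_head
  !(@eq_segment_pf _ W _ (a + 1) L s (state_of a (b :: l)) s (state_of (a + 1) l)) //;
  by move=> i; rewrite mem_irange => /andP[hi _]; rewrite state_of_cons //; lia.
Qed.

Lemma transfer_prod_rec g h a L s s' : transfer_prod g h a L.+1 s s' =
  \sum_(b <- [:: false; true])
   (WA g b false (s' a) * WT h (s a) false b * transfer_prod false false (a + 1) L s s' +
    WA g b false (s' a) * WT h (s a) true b * transfer_prod false true (a + 1) L s s' +
    WA g b true (s' a) * WT h (s a) false b * transfer_prod true false (a + 1) L s s' +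
    WA g b true (s' a) * WT h (s a) true b * transfer_prod true true (a + 1) L s s').
Proof.
have expand (A0 A1 B0 B1 P0 P1 Q0 Q1 : {poly K}) :
  (A0 * P0 + A1 * P1) * (B0 * Q0 + B1 * Q1) =
  A0 * B0 * (P0 * Q0) + A0 * B1 * (P0 * Q1) + A1 * B0 * (P1 * Q0) + A1 * B1 * (P1 * Q1).
  by ring.
rewrite /transfer_prod [bool_seqs L.+1]/= big_cat !big_map !big_cons big_nil addr0.
by congr (_ + _); under eq_bigr do rewrite segment_pf_top_cons segment_pf_bottom_cons expand;
   rewrite !big_split /= -!big_distrr.
Qed.

(* The second identity (a line entering through either row contributes the
   same) is what carries the induction. *)
Lemma transfer_prod_inverse L : forall a s s',
  transfer_prod false false a L s s' = (window a L s == window a L s')%:R /\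
  transfer_prod false true a L s s' = transfer_prod true false a L s s'.
Proof.
elim: L => [|L IH] a s s'.
  by rewrite /transfer_prod /= !big_cons !big_nil /= !addr0 !mulr0 !mul0r mulr1.
have [IH1 IH2] := IH (a + 1) s s'.
rewrite !transfer_prod_rec !big_cons !big_nil !addr0 /= IH1 IH2 /window /= eqseq_cons.
by case: (s a); case: (s' a) => /=; split; rewrite ?mul0r ?mul1r ?addr0 ?add0r; ring.
Qed.

End TransferInverse.

Lemma coefM_tail (R : nzRingType) (p q : {poly R}) m :
  \sum_(k < m.+1) p`_k.+1 * q`_(m - k) = (p * q)`_m.+1 - p`_0 * q`_m.+1.
Proof.
rewrite coefM [in RHS]big_ord_recl /= subn0 addrAC subrr add0r.
by apply: eq_bigr => i _; rewrite /bump leq0n add1n subSS.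
Qed.

Section InverseCoefficients.
Variables (K : fieldType) (t : K).

Lemma size_Ainv_upto n : size (Ainv_upto t n) = n.+1.
Proof. by elim: n => [|n IH] //=; rewrite size_rcons IH. Qed.

Lemma nth_Ainv_upto n j : (j <= n)%N -> nth (op1 K) (Ainv_upto t n) j = Ainvcoef t j.
Proof.
elim: n => [|n IH] le_jn; first by case: j le_jn.
case: (ltnP j n.+1) => lt_jn; first by rewrite /= nth_rcons size_Ainv_upto lt_jn IH.
by have -> : j = n.+1 by apply/eqP; rewrite eqn_leq le_jn.
Qed.

Lemma Ainvcoef_succ m s s' : Ainvcoef t m.+1 s' s =
  - \sum_(k < m.+1) opmul (Acoef t k.+1) (Ainvcoef t (m - k)) s' s.
Proof.
rewrite /Ainvcoef /= nth_rcons size_Ainv_upto ltnn eqxx.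
by congr (- _); apply: eq_bigr => k _; rewrite nth_Ainv_upto // leq_subr.
Qed.

Hypothesis t0 : t != 0.
Local Notation RT s s' := (rowsum 1 (- (t%:P * 'X)) 1 'X 1 ((1 - t)%:P * 'X) s s').

Lemma opmul_Acoef_window a L s s' k (B : op K) :
  vacuum_outside a L s -> vacuum_outside a L s' ->
  opmul (Acoef t k) B s' s =
  \sum_(l <- bool_seqs L) (segment_pf (WA t) false a L (state_of a l) s')`_k * B (state_of a l) s.
Proof.
move=> vs vs'; rewrite /opmul (@fsbig_maya_window _ _ _ a L); last first.
  move=> tau mtau; apply: contra_notP => vtau.
  have [a' [L' [vtau' vs'']]] := maya_common_window mtau (vacuum_outside_maya vs').
  rewrite (Acoef_segment_pf t0 _ mtau vtau' vs'') -(rowsum_segment_pf _ _ _ _ vtau' vs'').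
  by rewrite (rowsum_eq0 _ _ _ _ _ _ vs' vtau) coef0 mul0r.
apply: eq_big_seq => l; rewrite mem_bool_seqs => /eqP size_l.
have vl : vacuum_outside a L (state_of a l) by rewrite -size_l; exact: vacuum_state_of.
by rewrite (Acoef_segment_pf t0 _ (vacuum_outside_maya vl) vl vs').
Qed.

Lemma Ainvcoef_rowsum n s s' : maya s -> maya s' -> Ainvcoef t n s' s = (RT s s')`_n.
Proof.
elim/ltn_ind: n s s' => n IH s s' ms ms'.
have [a [L [vs vs']]] := maya_common_window ms ms'.
rewrite (rowsum_segment_pf _ _ _ _ vs vs').
case: n IH => [|m] IH.
  rewrite /Ainvcoef /= /op1 segment_pf_coef0 ?coefCM ?coefX ?mulr0 // eq_window //.
  by rewrite eq_sym; case: eqP.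
set PA := fun l => segment_pf (WA t) false a L (state_of a l) s'.
set PT := fun l => segment_pf (WT t) false a L s (state_of a l).
have vacuum_l l : l \in bool_seqs L -> vacuum_outside a L (state_of a l).
  by rewrite mem_bool_seqs => /eqP <-; apply: vacuum_state_of.
have termE (k : 'I_m.+1) : opmul (Acoef t k.+1) (Ainvcoef t (m - k)) s' s =
    \sum_(l <- bool_seqs L) (PA l)`_k.+1 * (PT l)`_(m - k).
  rewrite (opmul_Acoef_window _ _ vs vs'); apply: eq_big_seq => l /vacuum_l vl.
  rewrite IH ?ltnS ?leq_subr ?(rowsum_segment_pf (- (t%:P * 'X)) 'X 1 ((1 - t)%:P * 'X) vs vl) //.
  exact: vacuum_outside_maya vl.
have PA_coef0 l : l \in bool_seqs L -> (PA l)`_0 = (l == window a L s')%:R.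
  move=> l_in; rewrite segment_pf_coef0 ?coefN ?coefCM ?coefX ?mulr0 ?oppr0 //.
  by move: l_in; rewrite mem_bool_seqs => /eqP <-; rewrite window_state_of.
rewrite Ainvcoef_succ (eq_bigr _ (fun k _ => termE k)) exchange_big /=.
under eq_bigr do rewrite coefM_tail.
rewrite sumrB -coef_sum.
have -> : \sum_(l <- bool_seqs L) PA l * PT l = transfer_prod t false false a L s s' by [].
have [-> _] := transfer_prod_inverse t L a s s'.
rewrite -mulr_natl mulr1 coefMn coef1 /= mul0rn sub0r opprK.
rewrite (bigD1_seq (window a L s')) ?mem_bool_seqs ?size_window ?uniq_bool_seqs //=.
rewrite big_seq_cond big1 ?addr0 => [|l /andP[l_in ne]]; last first.
  by rewrite PA_coef0 // (negbTE ne) mul0r.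
by rewrite PA_coef0 ?mem_bool_seqs ?size_window // eqxx mul1r /PT state_of_window.
Qed.

End InverseCoefficients.

Theorem corollary4p10 (s s' : state) (hs : maya s) (hs' : maya s') (n : nat) :
  Ainvcoef tC n s' s =
  (rowsum (1 : {poly Ct}) (- (tC%:P * 'X)) 1 'X 1 ((1 - tC)%:P * 'X) s s')`_n.
Proof.
have tC_neq0 : tC != 0 by rewrite /tC tofrac_eq0 polyX_eq0.
exact: (Ainvcoef_rowsum tC_neq0 n hs hs').
Qed.
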